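(* Let $\Gamma=(\mathcal{A},\mathcal{R})$ be a finite argumentation framework with $|\mathcal{A}|=k$ and indexing $\phi$, and let $\Pi_\Gamma$ be a CNF formula over $\mathrm{VARS}(\Gamma)$ whose satisfying assignments are exactly those assignments for which setting $\mathcal{L}ab(\phi(i))=\mathtt{in}/\mathtt{out}/\mathtt{undec}$ according as $I_i/O_i/U_i$ is true yields a well-defined complete labelling of $\Gamma$ with at least one argument labelled $\mathtt{in}$. Let $SS$ be any procedure which, given a CNF formula, returns some satisfying assignment if one exists and the symbol $\varepsilon$ otherwise (the choice among satisfying assignments being arbitrary). For an assignment $\nu$ let $\mathrm{INARGS}(\nu)=\{\phi(i): I_i \text{ true in }\nu\}$. Consider the following procedure PrefSat: Set $E_p:=\emptyset$ and $cnf:=\Pi_\Gamma$. Outer loop: set $cnfdf:=cnf$ and $prefcand:=$ undefined. Inner loop: let $\nu:=SS(cnfdf)$; if $\nu\ne\varepsilon$, set $prefcand:=\nu$, $S:=\mathrm{INARGS}(\nu)$, and replace $cnfdf$ by $cnfdf\wedge\bigwedge_{a\in S}I_{\phi^{-1}(a)}\wedge\big(\bigvee_{a\in\mathcal{A}\setminus S}I_{\phi^{-1}(a)}\big)$ (an empty disjunction being false); repeat the inner loop as long as $\nu\neq\varepsilon$ and $\mathrm{INARGS}(\nu)\neq\mathcal{A}$. After the inner loop, if $prefcand$ is defined, set $E_p:=E_p\cup\{\mathrm{INARGS}(prefcand)\}$ and replace $cnf$ by $cnf\wedge\bigvee_{a\in\mathcal{A}\setminus\mathrm{INARGS}(prefcand)}I_{\phi^{-1}(a)}$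 (an empty disjunction being false); repeat the outer loop as long as $prefcand$ is defined. Finally, if $E_p=\emptyset$ set $E_p:=\{\emptyset\}$, and return $E_p$. Then, for every choice of outputs of $SS$, PrefSat terminates and returns exactly the set of preferred extensions of $\Gamma$.
   Context: An argumentation framework is a pair $(\mathcal{A},\mathcal{R})$ with $\mathcal{A}$ a finite set and $\mathcal{R}\subseteq\mathcal{A}\times\mathcal{A}$; $b$ attacks $a$ iff $(b,a)\in\mathcal{R}$, and $a^-=\{b:(b,a)\in\mathcal{R}\}$. A set $S\subseteq\mathcal{A}$ is conflict-free if no $a,b\in S$ with $b$ attacking $a$; $a$ is acceptable w.r.t. $S$ if every attacker of $a$ is attacked by some element of $S$; $S$ is admissible if conflict-free and every element of $S$ is acceptable w.r.t. $S$; $S$ is a preferred extension if it is a maximal (w.r.t. set inclusion) admissible set. A total function $\mathcal{L}ab:\mathcal{A}\to\{\mathtt{in},\mathtt{out},\mathtt{undec}\}$ is a complete labelling iff for every $a$: $\mathcal{L}ab(a)=\mathtt{in}\Leftrightarrow\forall b\in a^-\ \mathcal{L}ab(b)=\mathtt{out}$; $\mathcal{L}ab(a)=\mathtt{out}\Leftrightarrow\exists b\in a^-\ \mathcal{L}ab(b)=\mathtt{in}$; $\mathcal{L}ab(a)=\mathtt{undec}\Leftrightarrow(\forall b\in a^-\ \mathcal{L}ab(b)\ne\mathtt{in}\wedge\exists c\in a^-\ \mathcal{L}ab(c)=\mathtt{undec})$. An indexing is a bijection $\phi:\{1,\dots,k\}\to\mathcal{A}$, and $\mathrm{VARS}(\Gamma)=\bigcup_{i=1}^k\{I_i,O_i,U_i\}$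 are boolean variables. *)

From HB Require Import structures.
From mathcomp Require Import all_boot.
Set Implicit Arguments. Unset Strict Implicit. Unset Printing Implicit Defensive.

(* ---------- Argumentation frameworks: (A, R) with A : finType, R b a <-> b attacks a ---------- *)
Section AF.
Variables (A : finType) (R : rel A).

Definition conflict_free (S : {set A}) : bool :=
  [forall a in S, forall b in S, ~~ R b a].

Definition acceptable (a : A) (S : {set A}) : bool :=
  [forall b, R b a ==> [exists c in S, R c b]].

Definition admissible (S : {set A}) : bool :=
  conflict_free S && [forall a in S, acceptable a S].

Definition preferred (S : {set A}) : bool :=
  admissible S && [forall T : {set A}, (admissible T && (S \subset T)) ==> (T == S)].

Inductive lab := In | Out | Undec.

Definition complete_labelling (L : A -> lab) : Prop :=
  forall a,
    (L a = In <-> (forall b, R b a -> L b = Out)) /\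
    (L a = Out <-> (exists b, R b a /\ L b = In)) /\
    (L a = Undec <-> ((forall b, R b a -> L b <> In) /\ exists c, R c a /\ L c = Undec)).
End AF.

Inductive vkind := VI | VO | VU.
Definition var (k : nat) := ('I_k * vkind)%type.
Definition literal (k : nat) := (bool * var k)%type.   (* (polarity, variable) *)
Definition clause (k : nat) := seq (literal k).       (* disjunction; [::] = false *)
Definition cnf (k : nat) := seq (clause k).           (* conjunction *)
Definition assignment (k : nat) := var k -> bool.

Definition sat (k : nat) (nu : assignment k) (f : cnf k) : bool :=
  all (fun c => has (fun l : literal k => nu l.2 == l.1) c) f.

Section Encoding.
Variables (A : finType) (R : rel A) (k : nat) (phi : 'I_k -> A).

Definition encodes_nonempty_complete (nu : assignment k) : Prop :=
  exists L : A -> lab,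
    (forall i, (nu (i, VI) <-> L (phi i) = In) /\
               (nu (i, VO) <-> L (phi i) = Out) /\
               (nu (i, VU) <-> L (phi i) = Undec)) /\
    complete_labelling R L /\ exists a, L a = In.

Definition INARGS (nu : assignment k) : {set A} :=
  [set phi i | i : 'I_k & nu (i, VI)].

Definition in_units (S : {set A}) : cnf k :=
  [seq [:: (true, (i, VI))] | i <- enum 'I_k & phi i \in S].

Definition out_disj (S : {set A}) : clause k :=
  [seq (true, (i, VI)) | i <- enum 'I_k & phi i \notin S].

(* SS is modelled as an arbitrary oracle: the answer to the n-th call on formula f
   is SS n f (None = epsilon). *)
Definition valid_solver (SS : nat -> cnf k -> option (assignment k)) : Prop :=
  forall n f, match SS n f return Prop with
              | Some nu => sat nu f
              | None => forall nu, ~~ sat nu f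
              end.

Variable SS : nat -> cnf k -> option (assignment k).

(* inner loop: returns the final prefcand and the updated call counter;
   None = out of fuel *)
Fixpoint inner (fuel : nat) (n : nat) (cnfdf : cnf k) (prefcand : option (assignment k))
  : option (option (assignment k) * nat) :=
  match fuel with
  | 0 => None
  | fuel'.+1 =>
    match SS n cnfdf with
    | None => Some (prefcand, n.+1)
    | Some nu =>
      let S := INARGS nu in
      let cnfdf' := cnfdf ++ in_units S ++ [:: out_disj S] in
      if S == setT then Some (Some nu, n.+1)
      else inner fuel' n.+1 cnfdf' (Some nu)
    end
  end.

Fixpoint outer (fuel : nat) (n : nat) (cnf0 : cnf k) (Ep : {set {set A}})
  : option {set {set A}} :=
  match fuel with
  | 0 => None
  | fuel'.+1 =>
    match inner fuel n cnf0 None with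
    | None => None
    | Some (None, _) => Some Ep
    | Some (Some p, n') =>
        outer fuel' n' (cnf0 ++ [:: out_disj (INARGS p)]) (Ep :|: [set INARGS p])
    end
  end.

(* PrefSat run with a fuel bound; None = did not terminate within the bound *)
Definition PrefSat (Pi : cnf k) (fuel : nat) : option {set {set A}} :=
  match outer fuel 0 Pi set0 with
  | None => None
  | Some Ep => Some (if Ep == set0 then [set set0] else Ep)
  end.
End Encoding.

(* Call a set of arguments a nonempty complete extension if it is the
   in-set of a complete labelling and is nonempty; by the hypothesis on Pi these
   are exactly the sets INARGS nu of the models nu of Pi.  The nonempty preferred
   extensions are exactly the maximal nonempty complete extensions (Dung's
   fundamental lemma turns a maximal admissible set into a complete labelling).

   The formulas built by the algorithm are tracked by the invariant
   "f represents P": the models of f are the models of Pi whose in-set satisfies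
   P.  Adding the unit clauses and the disjunction for S refines P by
   "S is a proper subset", and the outer blocking clause refines it by
   "not a subset of S".  Hence the inner loop climbs a strictly increasing chain
   of complete extensions and stops at a maximal one (at most #|A| steps), and
   the outer loop collects a new preferred extension not below any earlier one
   at each round, until all nonempty preferred extensions are found.  The final
   step replaces an empty result by {emptyset}, which is then the only
   preferred extension. *)
From HB Require Import structures.
From mathcomp Require Import all_boot zify.
Set Implicit Arguments. Unset Strict Implicit. Unset Printing Implicit Defensive.

(* Labels get a decidable equality, so that in-sets can be formed as finsets. *)
Definition lab_eqb (x y : lab) : bool :=
  match x, y with In, In | Out, Out | Undec, Undec => true | _, _ => false end.
Lemma lab_eqP : Equality.axiom lab_eqb.
Proof. by case; case; constructor. Qed.
HB.instance Definition _ := hasDecEq.Build lab lab_eqP.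

Section Argumentation.
Variables (A : finType) (R : rel A).

Lemma conflict_freeP (S : {set A}) :
  reflect (forall a b, a \in S -> b \in S -> ~~ R b a) (conflict_free R S).
Proof.
apply: (iffP forall_inP) => [H a b /H /forall_inP | H a Ha]; first exact.
by apply/forall_inP => b; apply: H.
Qed.

Lemma acceptableP (a : A) (S : {set A}) :
  reflect (forall b, R b a -> exists2 c, c \in S & R c b) (acceptable R a S).
Proof.
apply: (iffP forallP) => [H b Hb | H b].
  by move: (H b); rewrite Hb /= => /existsP [c /andP [Hc Hcb]]; exists c.
by apply/implyP => /H [c Hc Hcb]; apply/existsP; exists c; rewrite Hc.
Qed.

Lemma admissibleP (S : {set A}) : reflect
  ((forall a b, a \in S -> b \in S -> ~~ R b a) /\
   (forall a, a \in S -> forall b, R b a -> exists2 c, c \in S & R c b))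
  (admissible R S).
Proof.
apply: (iffP andP) => [[/conflict_freeP CF /forallP AC] | [CF AC]]; split => //.
- by move=> a Ha; move: (AC a); rewrite Ha => /acceptableP.
- exact/conflict_freeP.
- by apply/forallP => a; apply/implyP => /AC /acceptableP.
Qed.

Lemma admissible0 : admissible R set0.
Proof. by apply/admissibleP; split => [a b | a]; rewrite inE. Qed.

Lemma admissible_add (P : {set A}) a :
  admissible R P -> acceptable R a P -> admissible R (a |: P).
Proof.
move=> /admissibleP [CF AC] /acceptableP Ha.
have P_no_attack c : c \in P -> ~~ R c a.
  move=> Hc; apply/negP => /Ha [d Hd Hdc].
  by move: (CF c d Hc Hd); rewrite Hdc.
apply/admissibleP; split.
- move=> x y; rewrite !in_setU1 => /predU1P [-> | Hx] /predU1P [-> | Hy].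
  + by apply/negP => /Ha [c /P_no_attack/negP].
  + exact: P_no_attack.
  + by apply/negP => /(AC x Hx) [c /P_no_attack/negP].
  + exact: CF.
- move=> x; rewrite in_setU1 => /predU1P [-> | /AC Dx] b /[dup] Hb;
    [move=> /Ha | move=> /Dx] => -[c Hc Hcb];
    by exists c => //; rewrite in_setU1 Hc orbT.
Qed.

Lemma preferred_admissible (S : {set A}) : preferred R S -> admissible R S.
Proof. by case/andP. Qed.

Lemma preferred_maximal (S T : {set A}) :
  preferred R S -> admissible R T -> S \subset T -> T = S.
Proof. by case/andP => _ /forallP/(_ T) + AT ST; rewrite AT ST => /eqP. Qed.

Lemma preferred_above (T : {set A}) :
  admissible R T -> exists2 P, preferred R P & T \subset P.
Proof.
move=> AT; pose adm_above X := admissible R X && (T \subset X).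
have [|P /andP [AP TP] Pmax] := @arg_maxnP _ T adm_above (fun X => #|X|).
  by rewrite /adm_above AT subxx.
exists P => //; apply/andP; split => //; apply/forallP => Q; apply/implyP.
case/andP => AQ PQ; rewrite eq_sym eqEcard PQ.
by apply: Pmax; rewrite /adm_above AQ (subset_trans TP PQ).
Qed.

Definition in_set (L : A -> lab) : {set A} := [set a | L a == In].

Definition ne_complete (T : {set A}) : Prop :=
  exists L : A -> lab, [/\ complete_labelling R L, T = in_set L & T != set0].

(* The in-set of a complete labelling is admissible: attackers of in-arguments
   are out, hence attacked by an in-argument. *)
Lemma ne_complete_admissible (T : {set A}) : ne_complete T -> admissible R T.
Proof.
case=> L [HL -> _]; apply/admissibleP; split.
- move=> a b; rewrite !inE => /eqP /(proj1 (proj1 (HL a))) La /eqP Lb.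
  by apply/negP => /La; rewrite Lb.
- move=> a; rewrite inE => /eqP /(proj1 (proj1 (HL a))) La b /La.
  by move=> /(proj1 (proj1 (proj2 (HL b)))) [c [Hcb Lc]]; exists c; rewrite ?inE ?Lc.
Qed.

Lemma undec_clause (L : A -> lab) a :
  (L a = In <-> (forall b, R b a -> L b = Out)) ->
  (L a = Out <-> (exists b, R b a /\ L b = In)) ->
  (L a = Undec <-> ((forall b, R b a -> L b <> In) /\ exists c, R c a /\ L c = Undec)).
Proof.
move=> [InE InI] [OutE OutI]; split => [Lu | [noIn [c [Hca Lc]]]].
- have noIn b : R b a -> L b <> In by move=> Hb Lb; rewrite OutI // in Lu; exists b.
  split => //; case: (boolP [exists b, R b a && (L b != Out)]).
    move=> /existsP [b /andP [Hb Lb]].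
    by exists b; split => //; move: (noIn b Hb) Lb; case: (L b).
  move=> /existsPn allOut; suff : L a = In by rewrite Lu.
  by apply: InI => b Hb; move: (allOut b); rewrite Hb negbK => /eqP.
- case La: (L a) => //.
    by have := InE La c Hca; rewrite Lc.
  by have [b [Hb Lb]] := OutE La; case: (noIn b Hb Lb).
Qed.

Definition ext_labelling (P : {set A}) (a : A) : lab :=
  if a \in P then In else if [exists b in P, R b a] then Out else Undec.

Lemma ext_labelling_In (P : {set A}) a : ext_labelling P a = In <-> a \in P.
Proof. by rewrite /ext_labelling; case: (a \in P); split => //; case: ifP. Qed.

Lemma ext_labelling_Out (P : {set A}) a :
  ext_labelling P a = Out <-> a \notin P /\ exists2 b, b \in P & R b a.
Proof.
rewrite /ext_labelling; case: (a \in P); first by split => // [[]].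
case: ifP => [/existsP [b /andP [Hb Hba]] | /existsP Hn]; split => //.
- by move=> _; split => //; exists b.
- by case=> _ [b Hb Hba]; case: Hn; exists b; rewrite Hb.
Qed.

(* The labelling induced by a preferred extension is complete: an argument all
   of whose attackers are out is acceptable, hence in by maximality. *)
Lemma ext_labelling_complete (P : {set A}) :
  preferred R P -> complete_labelling R (ext_labelling P).
Proof.
move=> HP; have AP := preferred_admissible HP; have /admissibleP [CF AC] := AP.
have clause_in a : ext_labelling P a = In <-> (forall b, R b a -> ext_labelling P b = Out).
  split => [/ext_labelling_In Ha b Hba | allOut].
  - apply/ext_labelling_Out; split; last exact: AC Ha b Hba.
    by apply/negP => Hb; move: (CF a b Ha Hb); rewrite Hba.
  - apply/ext_labelling_In; apply: contraT => Hna.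
    have /(admissible_add AP) AaP : acceptable R a P.
      by apply/acceptableP => b /allOut /ext_labelling_Out [].
    by rewrite -(preferred_maximal HP AaP (subsetUr _ _)) in_setU1 eqxx in Hna.
have clause_out a : ext_labelling P a = Out <-> (exists b, R b a /\ ext_labelling P b = In).
  split => [/ext_labelling_Out [_ [b Hb Hba]] | [b [Hba /ext_labelling_In Hb]]].
  - by exists b; split => //; apply/ext_labelling_In.
  - apply/ext_labelling_Out; split; last by exists b.
    by apply/negP => Ha; move: (CF a b Ha Hb); rewrite Hba.
by move=> a; split; [|split]; [exact: clause_in | exact: clause_out | exact: undec_clause].
Qed.

Lemma preferred_ne_complete (P : {set A}) : preferred R P -> P != set0 -> ne_complete P.
Proof.
move=> HP Pn0; exists (ext_labelling P); split => //; first exact: ext_labelling_complete.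
by apply/setP => a; rewrite inE; apply/idP/eqP => /ext_labelling_In.
Qed.

(* A nonempty complete extension that is maximal among those is preferred:
   any admissible superset lies below a preferred, hence nonempty complete,
   extension, which by maximality is the set itself. *)
Lemma maximal_ne_complete_preferred (S : {set A}) :
  ne_complete S -> (forall T, ne_complete T -> S \subset T -> T = S) -> preferred R S.
Proof.
move=> CS Smax; apply/andP; split; first exact: ne_complete_admissible.
apply/forallP => T; apply/implyP => /andP [/preferred_above [P HP TP] ST].
have SP := subset_trans ST TP.
have Pn0 : P != set0.
  case: CS => L [_ _ Sn0]; apply: contraNneq Sn0 => P0; by rewrite -subset0 -P0.
have EP := Smax P (preferred_ne_complete HP Pn0) SP.
by rewrite eqEsubset ST andbT -EP.
Qed.

Definition ne_preferred : {set {set A}} := [set S | preferred R S && (S != set0)].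

(* The final step of PrefSat: if no nonempty preferred extension exists, the
   empty set is the unique preferred extension; otherwise it is not preferred. *)
Lemma preferred_from_ne_preferred :
  (if ne_preferred == set0 then [set set0] else ne_preferred) = [set S | preferred R S].
Proof.
have [P0 HP0 _] := preferred_above admissible0.
case: ifP => [/eqP none | /negbT /set0Pn [P]].
- apply/setP => S; rewrite !inE.
  have onlyempty Q : preferred R Q -> Q = set0.
    move=> HQ; apply/eqP; apply: contraT => Qn0.
    by rewrite -(in_set0 Q) -none inE HQ Qn0.
  by apply/eqP/idP => [-> | /onlyempty //]; rewrite -(onlyempty P0 HP0).
- rewrite inE => /andP [HP Pn0]; apply/setP => S; rewrite !inE.
  apply/andP/idP => [[] // | HS]; split => //.
  apply: contraTneq Pn0 => S0; rewrite negbK.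
  by rewrite (preferred_maximal HS (preferred_admissible HP)) S0 ?sub0set.
Qed.

End Argumentation.

Section PrefSatCorrect.
Variables (A : finType) (R : rel A) (k : nat) (phi : 'I_k -> A).
Hypothesis phi_bij : bijective phi.
Variable Pi : cnf k.
Hypothesis HPi : forall nu : assignment k, sat nu Pi <-> encodes_nonempty_complete R phi nu.

Lemma phi_surj a : exists i, a = phi i.
Proof. by case: phi_bij => g _ phiK; exists (g a); rewrite phiK. Qed.

Lemma mem_INARGS (nu : assignment k) i : (phi i \in INARGS phi nu) = nu (i, VI).
Proof. by rewrite /INARGS (mem_imset _ _ (bij_inj phi_bij)) inE. Qed.

Lemma sat_cat (nu : assignment k) f g : sat nu (f ++ g) = sat nu f && sat nu g.
Proof. by rewrite /sat all_cat. Qed.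

Lemma sat_in_units (nu : assignment k) S :
  sat nu (in_units phi S) = (S \subset INARGS phi nu).
Proof.
rewrite /sat /in_units all_map all_filter.
apply/allP/subsetP => [H a Ha | H i _].
  have [i Ei] := phi_surj a; subst a.
  by have := H i (mem_enum _ i); rewrite /= Ha /= orbF mem_INARGS => /eqP.
by apply/implyP => /H; rewrite /= orbF mem_INARGS => ->.
Qed.

Lemma sat_out_disj (nu : assignment k) S :
  sat nu [:: out_disj phi S] = ~~ (INARGS phi nu \subset S).
Proof.
rewrite /sat /= andbT /out_disj has_map.
apply/hasP/subsetPn => [[i] | [a Ha HaS]].
  by rewrite mem_filter /= => /andP [HiS _] /eqP nuI; exists (phi i); rewrite ?mem_INARGS.
have [i Ei] := phi_surj a; subst a; exists i; first by rewrite mem_filter HaS mem_enum.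
by rewrite /= -mem_INARGS Ha.
Qed.

(* The in-sets of the models of Pi are exactly the nonempty complete extensions;
   a labelling is turned into a model by reading off its three indicators. *)
Lemma sat_Pi_ne_complete (nu : assignment k) : sat nu Pi -> ne_complete R (INARGS phi nu).
Proof.
move=> /HPi [L [HL [CL [a La]]]].
have -> : INARGS phi nu = in_set L.
  apply/setP => b; have [i ->] := phi_surj b.
  by rewrite mem_INARGS inE; apply/idP/eqP => /(proj1 (HL i)).
by exists L; split => //; apply/set0Pn; exists a; rewrite inE La.
Qed.

Lemma ne_complete_sat T :
  ne_complete R T -> exists2 nu : assignment k, sat nu Pi & INARGS phi nu = T.
Proof.
case=> L [CL -> Tn0].
pose nu (v : var k) := L (phi v.1) == match v.2 with VI => In | VO => Out | VU => Undec end.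
exists nu.
  apply/HPi; exists L; split; first by move=> i; rewrite /nu /=; split; [|split]; split => /eqP.
  by split => //; case/set0Pn: Tn0 => a; rewrite inE => /eqP La; exists a.
by apply/setP => b; have [i ->] := phi_surj b; rewrite mem_INARGS inE.
Qed.

(* Invariant of PrefSat: the models of f are the models of Pi whose in-set
   satisfies P. *)
Definition represents (f : cnf k) (P : pred {set A}) : Prop :=
  forall nu : assignment k, sat nu f = sat nu Pi && P (INARGS phi nu).

Lemma represents_Pi : represents Pi predT.
Proof. by move=> nu; rewrite andbT. Qed.

Lemma represents_eq f (P P' : pred {set A}) : P =1 P' -> represents f P -> represents f P'.
Proof. by move=> PP' Hf nu; rewrite Hf PP'. Qed.

Lemma represents_above f P S :
  represents f P ->
  represents (f ++ in_units phi S ++ [:: out_disj phi S]) (fun T => P T && (S \proper T)).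
Proof.
by move=> Hf nu; rewrite !sat_cat sat_in_units sat_out_disj Hf properE -!andbA.
Qed.

Lemma represents_block f P S :
  represents f P -> represents (f ++ [:: out_disj phi S]) (fun T => P T && ~~ (T \subset S)).
Proof. by move=> Hf nu; rewrite sat_cat sat_out_disj Hf -andbA. Qed.

Lemma represents_model f P nu :
  represents f P -> sat nu f -> ne_complete R (INARGS phi nu) /\ P (INARGS phi nu).
Proof. by move=> -> /andP [/sat_Pi_ne_complete]. Qed.

Lemma represents_unsat f P :
  represents f P -> (forall nu, ~~ sat nu f) -> forall T, ne_complete R T -> ~~ P T.
Proof.
move=> Hf unsat T /ne_complete_sat [nu nuPi <-].
by have := unsat nu; rewrite Hf nuPi.
Qed.

Variable SS : nat -> cnf k -> option (assignment k).
Hypothesis HSS : valid_solver SS.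

Section InnerLoop.
(* The constraint on in-sets represented by the formula cnf of the outer loop;
   it is upward closed (it says "not below any extension found so far"). *)
Variable Q : pred {set A}.
Hypothesis Q_mono : forall T T' : {set A}, T \subset T' -> Q T -> Q T'.

Definition maximal_candidate (q : assignment k) : Prop :=
  [/\ ne_complete R (INARGS phi q), Q (INARGS phi q)
    & forall T, ne_complete R T -> INARGS phi q \subset T -> T = INARGS phi q].

Lemma full_maximal_candidate (nu : assignment k) :
  ne_complete R (INARGS phi nu) -> Q (INARGS phi nu) -> INARGS phi nu = setT ->
  maximal_candidate nu.
Proof.
move=> C_nu Q_nu full; split => // T _ HT.
by apply/eqP; rewrite eqEsubset HT full subsetT.
Qed.

(* With a candidate p, the inner loop climbs strictly above p and ends with a
   maximal candidate; each round enlarges the candidate, so #|A| - #|p| rounds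
   suffice. *)
Lemma inner_from_candidate fuel : forall n cnfdf (p : assignment k),
  ne_complete R (INARGS phi p) -> Q (INARGS phi p) ->
  represents cnfdf (fun T => Q T && (INARGS phi p \proper T)) ->
  #|A| < fuel + #|INARGS phi p| ->
  exists q n', inner phi SS fuel n cnfdf (Some p) = Some (Some q, n') /\ maximal_candidate q.
Proof.
elim: fuel => [|fuel IH] n cnfdf p C_p Q_p rep_df fuel_ok.
  by rewrite add0n ltnNge max_card in fuel_ok.
rewrite /=; have := HSS n cnfdf; case: (SS n cnfdf) => [nu sat_nu | unsat].
- have [C_nu /andP [Q_nu p_nu]] := represents_model rep_df sat_nu.
  case: ifP => [/eqP full | _].
    by exists nu, n.+1; split; last exact: full_maximal_candidate.
  apply: IH => //.
    apply: represents_eq (represents_above _ rep_df) => T /=.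
    by case: (boolP (INARGS phi nu \proper T)) => [/(proper_trans p_nu) -> | ];
      rewrite ?andbF ?andbT.
  by have := proper_card p_nu; lia.
- exists p, n.+1; split => //; split => // T C_T pT.
  apply/eqP; rewrite eqEsubset pT andbT; apply: contraT => p_T.
  have := represents_unsat rep_df unsat C_T.
  by rewrite (Q_mono pT Q_p) properE pT p_T.
Qed.

Lemma inner_start fuel n cnf0 :
  represents cnf0 Q -> #|A| <= fuel ->
  exists res n', inner phi SS fuel.+1 n cnf0 None = Some (res, n') /\
    if res is Some q then maximal_candidate q else forall T, ne_complete R T -> ~~ Q T.
Proof.
move=> rep0 fuel_ok; rewrite /=; have := HSS n cnf0; case: (SS n cnf0) => [nu sat_nu | unsat].
- have [C_nu Q_nu] := represents_model rep0 sat_nu.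
  case: ifP => [/eqP full | _].
    by exists (Some nu), n.+1; split; last exact: full_maximal_candidate.
  have nu_ne : 0 < #|INARGS phi nu| by case: C_nu => L [_ _]; rewrite card_gt0.
  have fuel' : #|A| < fuel + #|INARGS phi nu| by lia.
  have [q [n' [-> maxq]]] := inner_from_candidate n.+1 C_nu Q_nu (represents_above _ rep0) fuel'.
  by exists (Some q), n'.
- by exists None, n.+1; split => //; exact: represents_unsat rep0 unsat.
Qed.

End InnerLoop.

Definition not_below (Ep : {set {set A}}) : pred {set A} :=
  fun T => [forall E in Ep, ~~ (T \subset E)].

Lemma not_below_mono Ep (T T' : {set A}) : T \subset T' -> not_below Ep T -> not_below Ep T'.
Proof.
move=> TT' /forall_inP nb; apply/forall_inP => E /nb.
by apply: contra => /(subset_trans TT').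
Qed.

Lemma not_below0 : not_below set0 =1 predT.
Proof. by move=> T; apply/forall_inP => E; rewrite inE. Qed.

Lemma not_below_add Ep (S T : {set A}) :
  not_below (Ep :|: [set S]) T = not_below Ep T && ~~ (T \subset S).
Proof.
apply/forall_inP/andP => [nb | [/forall_inP nb TS] E].
  by split; [apply/forall_inP => E HE | ]; apply: nb; rewrite !inE ?HE ?eqxx ?orbT.
by rewrite !inE => /orP [/nb | /eqP ->].
Qed.

(* The outer loop: each round collects a new nonempty preferred extension
   (a maximal candidate not below the collected ones), and the final round,
   finding no candidate, certifies that all have been collected. *)
Lemma outer_collects fuel : forall n cnf0 (Ep : {set {set A}}),
  represents cnf0 (not_below Ep) -> Ep \subset ne_preferred R ->
  #|A| + #|ne_preferred R :\: Ep| < fuel ->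
  outer phi SS fuel n cnf0 Ep = Some (ne_preferred R).
Proof.
elim: fuel => [//|fuel IH] n cnf0 Ep rep0 Ep_pref fuel_ok; cbn [outer].
have [|[q|] [n' [-> found]]] := inner_start (@not_below_mono Ep) n (fuel := fuel) rep0.
  by lia.
- case: found => C_q nb_q q_max; set S := INARGS phi q in C_q nb_q q_max *.
  have S_pref : S \in ne_preferred R.
    by rewrite inE (maximal_ne_complete_preferred C_q q_max); case: C_q => L [].
  have S_new : S \notin Ep.
    by apply: contraL nb_q => SEp; apply/forall_inPn; exists S; rewrite ?negbK.
  apply: IH.
  + by apply: represents_eq (represents_block _ rep0) => T; rewrite not_below_add.
  + by rewrite subUset sub1set S_pref Ep_pref.
  + suff : #|ne_preferred R :\: (Ep :|: [set S])| < #|ne_preferred R :\: Ep| by lia.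
    apply/proper_card/properP; split; first exact/setDS/subsetUl.
    by exists S; rewrite !in_setD ?in_setU ?set11 ?orbT ?S_new.
- congr Some; apply/eqP; rewrite eqEsubset Ep_pref /=; apply/subsetP => E.
  rewrite inE => /andP [E_pref En0].
  have /forall_inPn [E' E'Ep EE'] := found E (preferred_ne_complete E_pref En0).
  have /subsetP/(_ E' E'Ep) := Ep_pref; rewrite inE => /andP [E'_pref _].
  rewrite negbK in EE'.
  by rewrite -(preferred_maximal E_pref (preferred_admissible E'_pref) EE').
Qed.

Lemma PrefSat_correct fuel : #|A| + #|ne_preferred R| < fuel ->
  PrefSat phi SS Pi fuel = Some [set S : {set A} | preferred R S].
Proof.
move=> fuel_ok; rewrite /PrefSat outer_collects ?sub0set ?setD0 //.
  by rewrite preferred_from_ne_preferred.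
by apply: represents_eq represents_Pi => T; rewrite not_below0.
Qed.

End PrefSatCorrect.

Theorem theorem1 (A : finType) (R : rel A) (k : nat) (phi : 'I_k -> A)
    (phi_bij : bijective phi) (Pi : cnf k)
    (HPi : forall nu : assignment k, sat nu Pi <-> encodes_nonempty_complete R phi nu)
    (SS : nat -> cnf k -> option (assignment k)) (HSS : valid_solver SS) :
  exists N : nat, forall fuel : nat, N <= fuel ->
    PrefSat phi SS Pi fuel = Some [set S : {set A} | preferred R S].
Proof.
exists (#|A| + #|ne_preferred R|).+1 => fuel fuel_ok.
exact: (PrefSat_correct phi_bij HPi HSS fuel_ok).
Qed.
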